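(* Let $p \in \mathbb{R}\setminus\{0\}$, $q \in \mathbb{R}$, and $\Delta = \frac{q^2}{4} - p$. Let $\mathcal{A}_{p,q} = \{A \in S(4,\mathbb{R}) : \operatorname{Pf}(A) = p,\ \operatorname{s}(A) = q\}$, viewed as the subset $\{(a,b,c,d,e,f) \in \mathbb{R}^6 : af - be + cd = p,\ a + f = q\}$ of $\mathbb{R}^6$. Then: (1) if $\Delta < 0$, $\mathcal{A}_{p,q}$ is homeomorphic to $(\mathbb{R}^2 \setminus \{(0,0)\}) \times \mathbb{R}^2$; (2) if $\Delta > 0$, $\mathcal{A}_{p,q}$ is homeomorphic to $\mathbb{S}^2 \times \mathbb{R}^2$.
   Context: $S(4,\mathbb{R})$ is the set of invertible skew-symmetric real $4\times 4$ matrices; such a matrix is identified with $(a,b,c,d,e,f)\in\mathbb{R}^6$ via $A = \begin{bmatrix} 0 & a & b & c \\ -a & 0 & d & e \\ -b & -d & 0 & f \\ -c & -e & -f & 0\end{bmatrix}$, and $\operatorname{Pf}(A) = af - be + cd$, $\operatorname{s}(A) = a + f$. *)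

From HB Require Import structures.
From mathcomp Require Import all_boot all_order all_algebra.
From mathcomp Require Import all_classical all_reals all_analysis.
Import numFieldNormedType.Exports.
Set Implicit Arguments. Unset Strict Implicit. Unset Printing Implicit Defensive.
Import Order.TTheory GRing.Theory Num.Theory.
Local Open Scope classical_set_scope.
Local Open Scope ring_scope.

Definition homeomorphic (T1 T2 : topologicalType) (A : set T1) (B : set T2) : Prop :=
  exists (f : T1 -> T2) (g : T2 -> T1),
    (forall x, A x -> B (f x)) /\
    (forall y, B y -> A (g y)) /\
    (forall x, A x -> g (f x) = x) /\
    (forall y, B y -> f (g y) = y) /\
    {within A, continuous f} /\
    {within B, continuous g}.

(* R^6 with coordinates (a,b,c,d,e,f) of the skew-symmetric 4x4 matrix. *)
Notation R6 R := (R * R * R * R * R * R)%type.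

Definition Pf6 (R : realType) (x : R6 R) : R :=
  let '(a, b, c, d, e, f) := x in a * f - b * e + c * d.

Definition s6 (R : realType) (x : R6 R) : R :=
  let '(a, b, c, d, e, f) := x in a + f.

Definition Apq (R : realType) (p q : R) : set (R6 R) :=
  [set x | Pf6 x = p /\ s6 x = q].

Definition punctured_plane_times_plane (R : realType) : set ((R * R) * (R * R)) :=
  [set x | x.1 <> (0, 0)].

Definition sphere2_times_plane (R : realType) : set ((R * R * R) * (R * R)) :=
  [set x | let '(u, v, w) := x.1 in u ^+ 2 + v ^+ 2 + w ^+ 2 = 1].

From HB Require Import structures.
From mathcomp Require Import all_boot all_order all_algebra.
From mathcomp Require Import all_classical all_reals all_analysis.
From mathcomp Require Import ring lra.
Import numFieldNormedType.Exports.
Import Order.TTheory GRing.Theory Num.Theory.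
Local Open Scope classical_set_scope.
Local Open Scope ring_scope.

(* For (a, b, c, d, e, f) with a + f = q put t = (a - f)/2, u = (b + e)/2,
   z = (c - d)/2, v = (b - e)/2 and w = (c + d)/2; then
   af - be + cd = q^2/4 - (t^2 + u^2 + z^2) + (v^2 + w^2), so this linear
   change of coordinates maps A_{p,q} onto the quadric
   t^2 + u^2 + z^2 = v^2 + w^2 + Delta in R^3 x R^2.
   If Delta > 0, dividing (t, u, z) by sqrt (v^2 + w^2 + Delta) identifies the
   quadric with S^2 x R^2.  If Delta < 0, dividing (v, w) by
   sqrt (t^2 + u^2 + z^2 - Delta) identifies it with S^1 x R^3, and
   (c, y, s) |-> (e^s c, y) maps S^1 x R^2 x R onto (R^2 \ 0) x R^2. *)

Lemma within_continuous_subspace_comp {T1 T2 T3 : topologicalType}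
    {A : set T1} {B : set T2} {f : T1 -> T2} {g : T2 -> T3} :
  {homo f : x / A x >-> B x} ->
  {within A, continuous f} -> {within B, continuous g} ->
  {within A, continuous (g \o f)}.
Proof.
move=> fAB cf cg x; apply: (@continuous_comp _ (subspace B)); last exact: cg.
exact: (subspaceT_continuous (f := mkfun_fun fAB)).
Qed.

Lemma homeomorphic_trans {T1 T2 T3 : topologicalType}
    {A : set T1} {B : set T2} {C : set T3} :
  homeomorphic A B -> homeomorphic B C -> homeomorphic A C.
Proof.
move=> [f [g [fAB [gBA [gfK [fgK [cf cg]]]]]]].
move=> [f' [g' [fBC [gCB [gfK' [fgK' [cf' cg']]]]]]].
exists (f' \o f), (g \o g'); split; [|split; [|split; [|split; [|split]]]].
- by move=> x /fAB /fBC.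
- by move=> z /gCB /gBA.
- by move=> x Ax /=; rewrite gfK' ?gfK //; exact: fAB.
- by move=> z Cz /=; rewrite fgK ?fgK' //; exact: gCB.
- exact: within_continuous_subspace_comp fAB cf cf'.
- exact: within_continuous_subspace_comp gCB cg' cg.
Qed.

Lemma continuous_swap {T1 T2 : topologicalType} :
  continuous (fun z : T1 * T2 => (z.2, z.1)).
Proof. by move=> z; apply: cvg_pair; [exact: cvg_snd | exact: cvg_fst]. Qed.

Lemma homeomorphic_swap {T1 T2 : topologicalType} (A : set (T1 * T2)) :
  homeomorphic A [set z | A (z.2, z.1)].
Proof.
exists (fun z => (z.2, z.1)), (fun z => (z.2, z.1)).
split; [|split; [|split; [|split; [|split]]]].
- by case.
- by case.
- by case.
- by case.
- exact/continuous_subspaceT/continuous_swap.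
- exact/continuous_subspaceT/continuous_swap.
Qed.

Section continuous_at_combinators.
Context {R : realType} {T : topologicalType} {x : T}.

Lemma continuous_at_pair {U V : topologicalType} {f : T -> U} {g : T -> V} :
  {for x, continuous f} -> {for x, continuous g} ->
  {for x, continuous (fun y => (f y, g y))}.
Proof. exact: cvg_pair. Qed.

Lemma continuous_at_fst {U V : topologicalType} {f : T -> U * V} :
  {for x, continuous f} -> {for x, continuous (fun y => (f y).1)}.
Proof. by move=> cf; apply: cvg_comp cf _; exact: cvg_fst. Qed.

Lemma continuous_at_snd {U V : topologicalType} {f : T -> U * V} :
  {for x, continuous f} -> {for x, continuous (fun y => (f y).2)}.
Proof. by move=> cf; apply: cvg_comp cf _; exact: cvg_snd. Qed.

Lemma continuous_at_add {f g : T -> R} :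
  {for x, continuous f} -> {for x, continuous g} ->
  {for x, continuous (fun y => f y + g y)}.
Proof. exact: cvgD. Qed.

Lemma continuous_at_opp {f : T -> R} :
  {for x, continuous f} -> {for x, continuous (fun y => - f y)}.
Proof. exact: cvgN. Qed.

Lemma continuous_at_mul {f g : T -> R} :
  {for x, continuous f} -> {for x, continuous g} ->
  {for x, continuous (fun y => f y * g y)}.
Proof. exact: cvgM. Qed.

(* [continuous_at_pair] does not unify with the nested product structure
   of [R6 R], hence this separate rule for its 6-tuples. *)
Lemma continuous_at_tuple6 {f1 f2 f3 f4 f5 f6 : T -> R} :
  {for x, continuous f1} -> {for x, continuous f2} -> {for x, continuous f3} ->
  {for x, continuous f4} -> {for x, continuous f5} -> {for x, continuous f6} ->
  {for x, continuous (fun y => (f1 y, f2 y, f3 y, f4 y, f5 y, f6 y) : R6 R)}.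
Proof.
move=> c1 c2 c3 c4 c5 c6.
exact: cvg_pair (cvg_pair (cvg_pair (cvg_pair (cvg_pair c1 c2) c3) c4) c5) c6.
Qed.

Lemma continuous_at_expr2 {f : T -> R} :
  {for x, continuous f} -> {for x, continuous (fun y => f y ^+ 2)}.
Proof. by move=> cf; exact: (cvgM cf cf). Qed.

Lemma continuous_at_inv {f : T -> R} :
  {for x, continuous f} -> f x != 0 -> {for x, continuous (fun y => (f y)^-1)}.
Proof. by move=> cf fx0; exact: cvgV. Qed.

Lemma continuous_at_sqrt {f : T -> R} :
  {for x, continuous f} -> {for x, continuous (fun y => Num.sqrt (f y))}.
Proof. by move=> cf; exact: continuous_comp cf (@sqrt_continuous R _). Qed.

Lemma continuous_at_expR {f : T -> R} :
  {for x, continuous f} -> {for x, continuous (fun y => expR (f y))}.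
Proof. by move=> cf; exact: continuous_comp cf (@continuous_expR R _). Qed.

Lemma continuous_at_ln {f : T -> R} :
  {for x, continuous f} -> 0 < f x -> {for x, continuous (fun y => ln (f y))}.
Proof. by move=> cf fx0; exact: continuous_comp cf (continuous_ln fx0). Qed.

End continuous_at_combinators.

(* [eapply @l] rather than [eapply l]: inserting the implicit arguments of
   [l] before unification makes the canonical structure inference fail. *)
Ltac continuity_step f :=
  lazymatch f with
  | fun _ => ?c => exact: cvg_cst
  | fun _ => (_, _, _, _, _, _) => eapply @continuous_at_tuple6
  | fun _ => (_, _) => eapply @continuous_at_pair
  | fun _ => _.1 => eapply @continuous_at_fst
  | fun _ => _.2 => eapply @continuous_at_snd
  | fun _ => _ + _ => eapply @continuous_at_add
  | fun _ => - _ => eapply @continuous_at_opp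
  | fun _ => _ * _ => eapply @continuous_at_mul
  | fun _ => _ ^+ 2 => eapply @continuous_at_expr2
  | fst => exact: cvg_fst
  | snd => exact: cvg_snd
  end.

Ltac continuity := repeat lazymatch goal with
  | |- continuous_at _ ?f => continuity_step f
  | |- {for _, continuous ?f} => continuity_step f
  end.

Section squared_norms.
Context {R : realType}.

Definition sqnorm2 (y : R * R) : R := y.1 ^+ 2 + y.2 ^+ 2.
Definition sqnorm3 (x : R * R * R) : R := x.1.1 ^+ 2 + x.1.2 ^+ 2 + x.2 ^+ 2.

Lemma sqnorm2Z k y : sqnorm2 (k *: y) = k ^+ 2 * sqnorm2 y.
Proof. by rewrite /sqnorm2 /= !exprMn mulrDr. Qed.

Lemma sqnorm3Z k x : sqnorm3 (k *: x) = k ^+ 2 * sqnorm3 x.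
Proof. by rewrite /sqnorm3 /= !exprMn !mulrDr. Qed.

Lemma sqnorm2_ge0 y : 0 <= sqnorm2 y.
Proof. by rewrite addr_ge0 ?sqr_ge0. Qed.

Lemma sqnorm3_ge0 x : 0 <= sqnorm3 x.
Proof. by rewrite !addr_ge0 ?sqr_ge0. Qed.

Lemma continuous_sqnorm2 : continuous sqnorm2.
Proof. by move=> y; rewrite /sqnorm2; continuity. Qed.

Lemma continuous_sqnorm3 : continuous sqnorm3.
Proof. by move=> x; rewrite /sqnorm3; continuity. Qed.

Lemma sqnorm2_gt0 y : y != 0 -> 0 < sqnorm2 y.
Proof.
case: y => a b abNZ; rewrite /sqnorm2 /= lt_def paddr_eq0 ?sqr_ge0 //.
by rewrite !sqrf_eq0 addr_ge0 ?sqr_ge0 // andbT -xpair_eqE.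
Qed.

End squared_norms.

Section rescale.
Context {R : realType} {X : normedModType R} {Y : topologicalType}.
Variables (N : X -> R) (lam : Y -> R).
Hypothesis NZ : forall k x, N (k *: x) = k ^+ 2 * N x.
Hypotheses (lam_cont : continuous lam) (lam_gt0 : forall y, 0 < lam y).

Let r y := Num.sqrt (lam y).

Let r_neq0 y : r y != 0.
Proof. by rewrite gt_eqF // sqrtr_gt0. Qed.

Let r_sqr y : r y ^+ 2 = lam y.
Proof. by rewrite sqr_sqrtr // ltW. Qed.

Let continuous_r_snd {T : topologicalType} :
  continuous (fun z : T * Y => r z.2).
Proof.
move=> z; apply: continuous_at_sqrt.
by apply: continuous_comp; [exact: cvg_snd | exact: lam_cont].
Qed.

Lemma homeomorphic_rescale :
  homeomorphic [set z : X * Y | N z.1 = lam z.2] [set z : X * Y | N z.1 = 1].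
Proof.
exists (fun z => ((r z.2)^-1 *: z.1, z.2)), (fun z => (r z.2 *: z.1, z.2)).
split; [|split; [|split; [|split; [|split]]]].
- by move=> [x y] /= Nx; rewrite NZ Nx -r_sqr exprVn mulVf // expf_neq0.
- by move=> [x y] /= Nx; rewrite NZ Nx mulr1 r_sqr.
- by move=> [x y] _ /=; rewrite scalerA divff // scale1r.
- by move=> [x y] _ /=; rewrite scalerA mulVf // scale1r.
- apply: continuous_subspaceT => z.
  have inv_cont := continuous_at_inv (continuous_r_snd z) (r_neq0 z.2).
  exact: cvg_pair (cvgZ inv_cont cvg_fst) cvg_snd.
- apply: continuous_subspaceT => z.
  exact: cvg_pair (cvgZ (continuous_r_snd z) cvg_fst) cvg_snd.
Qed.

End rescale.

Section polar.
Context {R : realType} {X : normedModType R} {Y : topologicalType}.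
Variable N : X -> R.
Hypothesis NZ : forall k x, N (k *: x) = k ^+ 2 * N x.
Hypotheses (N_cont : continuous N) (N_gt0 : forall x, x != 0 -> 0 < N x).

Let nrm x := Num.sqrt (N x).

Let N0 : N 0 = 0.
Proof. by rewrite -(scale0r 0) NZ expr0n mul0r. Qed.

Let nrm_gt0 x : x != 0 -> 0 < nrm x.
Proof. by move=> /N_gt0; rewrite sqrtr_gt0. Qed.

Let nrm_sqr x : x != 0 -> nrm x ^+ 2 = N x.
Proof. by move=> /N_gt0/ltW; exact: sqr_sqrtr. Qed.

Let nrm_unitZ k x : 0 <= k -> N x = 1 -> nrm (k *: x) = k.
Proof. by move=> k0 Nx; rewrite /nrm NZ Nx mulr1 sqrtr_sqr ger0_norm. Qed.

Let continuous_nrm_fst {T : topologicalType} :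
  continuous (fun z : X * T => nrm z.1).
Proof.
move=> z; apply: continuous_at_sqrt.
by apply: continuous_comp; [exact: cvg_fst | exact: N_cont].
Qed.

Lemma homeomorphic_polar :
  homeomorphic [set z : X * (Y * R) | N z.1 = 1] [set z : X * Y | z.1 <> 0].
Proof.
exists (fun z => (expR z.2.2 *: z.1, z.2.1)),
       (fun z => ((nrm z.1)^-1 *: z.1, (z.2, ln (nrm z.1)))).
split; [|split; [|split; [|split; [|split]]]].
- move=> [x [y t]] /= Nx /eqP.
  rewrite scaler_eq0 gt_eqF ?expR_gt0 //= => /eqP x0.
  by move: Nx; rewrite x0 N0 => /eqP; rewrite eq_sym oner_eq0.
- move=> [x y] /= /eqP x0.
  by rewrite NZ exprVn nrm_sqr // mulVf // gt_eqF // N_gt0.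
- move=> [x [y t]] /= Nx.
  rewrite nrm_unitZ ?expR_ge0 // expRK scalerA mulVf ?scale1r //.
  by rewrite gt_eqF ?expR_gt0.
- move=> [x y] /= /eqP x0.
  by rewrite lnK ?posrE ?nrm_gt0 // scalerA divff ?scale1r // gt_eqF ?nrm_gt0.
- apply: continuous_subspaceT => z.
  have t_cont : {for z, continuous (fun z : X * (Y * R) => z.2.2)}.
    by apply: cvg_comp cvg_snd _; exact: cvg_snd.
  have y_cont : {for z, continuous (fun z : X * (Y * R) => z.2.1)}.
    by apply: cvg_comp cvg_snd _; exact: cvg_fst.
  exact: cvg_pair (cvgZ (continuous_at_expR t_cont) cvg_fst) y_cont.
- apply: continuous_in_subspaceT => -[x y]; rewrite inE /= => /eqP x0.
  have nrm_x_gt0 : 0 < nrm x by exact: nrm_gt0.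
  have nrm_cont : {for (x, y), continuous (fun z : X * Y => nrm z.1)}.
    exact: continuous_nrm_fst.
  have inv_cont := continuous_at_inv nrm_cont (lt0r_neq0 nrm_x_gt0).
  have ln_cont := continuous_at_ln nrm_cont nrm_x_gt0.
  exact: cvg_pair (cvgZ inv_cont cvg_fst) (cvg_pair cvg_snd ln_cont).
Qed.

End polar.

Section skew_coordinates.
Context {R : realType}.

Definition quadric (D : R) : set ((R * R * R) * (R * R)) :=
  [set z | sqnorm3 z.1 = sqnorm2 z.2 + D].

Definition skew_coords (x : R6 R) : (R * R * R) * (R * R) :=
  (((x.1.1.1.1.1 - x.2) / 2, (x.1.1.1.1.2 + x.1.2) / 2,
    (x.1.1.1.2 - x.1.1.2) / 2),
   ((x.1.1.1.1.2 - x.1.2) / 2, (x.1.1.1.2 + x.1.1.2) / 2)).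

Definition skew_of_coords (q : R) (y : (R * R * R) * (R * R)) : R6 R :=
  (q / 2 + y.1.1.1, y.1.1.2 + y.2.1, y.2.2 + y.1.2,
   y.2.2 - y.1.2, y.1.1.2 - y.2.1, q / 2 - y.1.1.1).

Lemma Pf6_skew_of_coords q y :
  Pf6 (skew_of_coords q y) = q ^+ 2 / 4 - sqnorm3 y.1 + sqnorm2 y.2.
Proof. by rewrite /sqnorm3 /sqnorm2 /=; field. Qed.

Lemma s6_skew_of_coords q y : s6 (skew_of_coords q y) = q.
Proof. by rewrite /=; field. Qed.

Lemma skew_coordsK q x : s6 x = q -> skew_of_coords q (skew_coords x) = x.
Proof.
case: x => [[[[[a b] c] d] e] f] /= <-.
rewrite /skew_of_coords /skew_coords /=.
by congr (_, _, _, _, _, _); field.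
Qed.

Lemma skew_of_coordsK q y : skew_coords (skew_of_coords q y) = y.
Proof.
case: y => [[[t u] z] [v w]]; rewrite /skew_of_coords /skew_coords /=.
by congr ((_, _, _), (_, _)); field.
Qed.

Lemma homeomorphic_Apq_quadric p q :
  homeomorphic (Apq p q) (quadric (q ^+ 2 / 4 - p)).
Proof.
exists skew_coords, (skew_of_coords q).
split; [|split; [|split; [|split; [|split]]]].
- move=> x [Pfx sx]; rewrite /quadric /=.
  have := Pf6_skew_of_coords q (skew_coords x).
  by rewrite skew_coordsK // Pfx; lra.
- move=> y /= y_quad; split; last exact: s6_skew_of_coords.
  by rewrite Pf6_skew_of_coords y_quad; ring.
- by move=> x [_ sx]; exact: skew_coordsK.
- by move=> y _; exact: skew_of_coordsK.
- by apply: continuous_subspaceT => x; rewrite /skew_coords; continuity.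
- by apply: continuous_subspaceT => y; rewrite /skew_of_coords; continuity.
Qed.

Lemma homeomorphic_quadric_sphere (D : R) :
  0 < D -> homeomorphic (quadric D) (@sphere2_times_plane R).
Proof.
move=> D_gt0.
have -> : @sphere2_times_plane R = [set z | sqnorm3 z.1 = 1].
  by apply/seteqP; split => -[[[u v] w] y].
apply: (homeomorphic_rescale _ (fun y => sqnorm2 y + D) sqnorm3Z).
- by move=> y; continuity; exact: continuous_sqnorm2.
- by move=> y; have := sqnorm2_ge0 y; lra.
Qed.

Lemma homeomorphic_quadric_punctured (D : R) :
  D < 0 -> homeomorphic (quadric D) (@punctured_plane_times_plane R).
Proof.
move=> D_lt0; apply: homeomorphic_trans (homeomorphic_swap _) _.
have -> : [set z | quadric D (z.2, z.1)] =
          [set z : (R * R) * (R * R * R) | sqnorm2 z.1 = sqnorm3 z.2 - D].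
  by apply/seteqP; split => z /=; rewrite /quadric /=; lra.
apply: homeomorphic_trans
  (homeomorphic_rescale _ (fun x => sqnorm3 x - D) sqnorm2Z _ _) _.
- by move=> x; continuity; exact: continuous_sqnorm3.
- by move=> x; have := sqnorm3_ge0 x; lra.
exact: homeomorphic_polar sqnorm2Z continuous_sqnorm2 sqnorm2_gt0.
Qed.

End skew_coordinates.

Theorem theorem2p3 (R : realType) (p q : R) (hp : p != 0) :
  let Delta := q ^+ 2 / 4 - p in
  (Delta < 0 -> homeomorphic (Apq p q) (@punctured_plane_times_plane R)) /\
  (0 < Delta -> homeomorphic (Apq p q) (@sphere2_times_plane R)).
Proof.
move=> Delta; split => Delta0;
  apply: homeomorphic_trans (homeomorphic_Apq_quadric p q) _.
- exact: homeomorphic_quadric_punctured.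
- exact: homeomorphic_quadric_sphere.
Qed.
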